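(* Consider the descriptor system $Ex_{k+1}=Ax_k+Bu_k+w_k$, $y_k=Hx_k+v_{k-1}$ with $E,A\in\mathbb{R}^{n_1\times n}$, $B\in\mathbb{R}^{n_1\times q}$, $H\in\mathbb{R}^{m\times n}$, where $\begin{bmatrix}E^T&H^T\end{bmatrix}^T$ has full column rank, and let $P_0,Q,R$ be symmetric positive definite, $P_0^{(-)}=AP_0A^T+Q$. Let $\bar x_0$, inputs $u_0,\dots,u_{T-1}$, measurements $y_1,\dots,y_T$ be given, and let $N$ be an integer with $1\le N\le T-1$. Define the full information objective $$J_T(x_1,\dots,x_T)=\|Ex_1-A\bar x_0-Bu_0\|^2_{P_0^{(-)}}+\sum_{k=1}^{T-1}\|Ex_{k+1}-Ax_k-Bu_k\|_Q^2+\sum_{k=1}^{T}\|y_k-Hx_k\|_R^2.$$ Let $\hat x_k^{(+)},P_k^{(+)},P_k^{(-)}$ be given by the recursion in the context, and for $k\ge1$ define $$\Gamma_k^{sm}=\big((P_k^{(+)})^{-1}+A^TQ^{-1}A\big)^{-1},\qquad \hat x_k^{sm}(x_{k+1})=\hat x_k^{(+)}+\Gamma_k^{sm}A^TQ^{-1}\big(Ex_{k+1}-A\hat x_k^{(+)}-Bu_k\big),$$ and $$SC(\{x_k\}_{T-N}^T)=\|Ex_{T-N}-A\hat x^{(+)}_{T-N-1}-Bu_{T-N-1}\|^2_{P^{(-)}_{T-N-1}}+\sum_{k=T-N}^{T-1}\|Ex_{k+1}-Ax_k-Bu_k\|_Q^2+\sum_{k=T-N}^{T}\|y_k-Hx_k\|_R^2.$$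 Then there is a constant $c$ independent of $x_1,\dots,x_T$ such that for all $x_1,\dots,x_T\in\mathbb{R}^n$, $$J_T(x_1,\dots,x_T)=\sum_{k=1}^{T-N-1}\|x_k-\hat x_k^{sm}(x_{k+1})\|^2_{\Gamma_k^{sm}}+SC(\{x_k\}_{T-N}^T)+c.$$ In particular, the full information problem of minimizing $J_T$ subject to any constraints on $x_1,\dots,x_T$ is equivalent to minimizing the right-hand side subject to the same constraints.
   Context: Notation: for symmetric positive definite $S$, $\|z\|_S^2:=z^TS^{-1}z$. Recursion: $\hat x_0^{(+)}=\bar x_0$, $P_0^{(+)}=P_0$, $P_0^{(-)}=AP_0A^T+Q$, and for $k\ge1$: $P_k^{(+)}=(E^T(P_{k-1}^{(-)})^{-1}E+H^TR^{-1}H)^{-1}$, $P_k^{(-)}=AP_k^{(+)}A^T+Q$, $\hat x_k^{(+)}=P_k^{(+)}H^TR^{-1}y_k+P_k^{(+)}E^T(P_{k-1}^{(-)})^{-1}(A\hat x_{k-1}^{(+)}+Bu_{k-1})$. An empty sum is zero. *)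

From HB Require Import structures.
From mathcomp Require Import all_boot all_order all_algebra.
Set Implicit Arguments. Unset Strict Implicit. Unset Printing Implicit Defensive.
Import Order.TTheory GRing.Theory Num.Theory.
Local Open Scope ring_scope.

Definition spd (R : realFieldType) (p : nat) (S : 'M[R]_p) : Prop :=
  S^T = S /\ forall z : 'cV[R]_p, z != 0 -> 0 < (z^T *m S *m z) 0 0.

(* ||z||_S^2 := z^T S^{-1} z *)
Definition wnorm (R : realFieldType) (p : nat) (S : 'M[R]_p) (z : 'cV[R]_p) : R :=
  (z^T *m invmx S *m z) 0 0.

Section Filter.
Variables (R : realFieldType) (n1 n q m : nat).
Variables (E A : 'M[R]_(n1, n)) (B : 'M[R]_(n1, q)) (H : 'M[R]_(m, n)).
Variables (P0 : 'M[R]_n) (Q : 'M[R]_n1) (Rm : 'M[R]_m).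
Variables (xbar0 : 'cV[R]_n) (u : nat -> 'cV[R]_q) (y : nat -> 'cV[R]_m).

Fixpoint kf (k : nat) : 'M[R]_n * 'cV[R]_n :=
  match k with
  | 0%N => (P0, xbar0)
  | k'.+1 =>
      let: (Pp, xh) := kf k' in
      let Pm := A *m Pp *m A^T + Q in
      let Pnew := invmx (E^T *m invmx Pm *m E + H^T *m invmx Rm *m H) in
      (Pnew, Pnew *m H^T *m invmx Rm *m y k
             + Pnew *m E^T *m invmx Pm *m (A *m xh + B *m u k'))
  end.

Definition Pplus (k : nat) : 'M[R]_n := (kf k).1.
Definition xhat (k : nat) : 'cV[R]_n := (kf k).2.
Definition Pminus (k : nat) : 'M[R]_n1 := A *m Pplus k *m A^T + Q.

Definition Gsm (k : nat) : 'M[R]_n :=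
  invmx (invmx (Pplus k) + A^T *m invmx Q *m A).

Definition xsm (k : nat) (xnext : 'cV[R]_n) : 'cV[R]_n :=
  xhat k + Gsm k *m A^T *m invmx Q *m (E *m xnext - A *m xhat k - B *m u k).

Definition JT (T : nat) (x : nat -> 'cV[R]_n) : R :=
  wnorm (A *m P0 *m A^T + Q) (E *m x 1%N - A *m xbar0 - B *m u 0%N)
  + \sum_(1 <= k < T) wnorm Q (E *m x k.+1 - A *m x k - B *m u k)
  + \sum_(1 <= k < T.+1) wnorm Rm (y k - H *m x k).

Definition SC (T N : nat) (x : nat -> 'cV[R]_n) : R :=
  wnorm (Pminus (T - N - 1)) (E *m x (T - N)%N - A *m xhat (T - N - 1) - B *m u (T - N - 1)%N)
  + \sum_(T - N <= k < T) wnorm Q (E *m x k.+1 - A *m x k - B *m u k)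
  + \sum_(T - N <= k < T.+1) wnorm Rm (y k - H *m x k).

End Filter.

From mathcomp Require Import all_boot all_order all_algebra.
From mathcomp Require Import ring lra zify.
Set Implicit Arguments. Unset Strict Implicit. Unset Printing Implicit Defensive.
Import Order.TTheory GRing.Theory Num.Theory.
Local Open Scope ring_scope.

(* Completing the square, one time step at a time.  At step j the residual of
   [E x_(j+1)] against the prediction [A xh_j + B u_j] (weighted by P_j^(-))
   and the measurement residual at time j+1 combine, by the information form
   of the Kalman update, into the residual of [x_(j+1)] against the filtered
   estimate [xh_(j+1)] (weighted by P_(j+1)^(+)), up to a constant.  That
   residual and the dynamics residual of [E x_(j+2) - A x_(j+1) - B u_(j+1)]
   then split, by the Woodbury identity, into the smoother residual
   [x_(j+1) - xsm_(j+1)(x_(j+2))] and the prediction residual of step j+1.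
   Iterating from j = 0 (which is J_T) to j = T-N-1 (which is SC) telescopes. *)

Section MxForm.
Context {R : realFieldType}.

Definition mxform (p r : nat) (S : 'M[R]_(p, r)) (v : 'cV[R]_p) (w : 'cV[R]_r) : R :=
  (v^T *m S *m w) 0 0.
Arguments mxform {p r}.

Lemma mxformBl p (S : 'M[R]_p) (v1 v2 w : 'cV_p) :
  mxform S (v1 - v2) w = mxform S v1 w - mxform S v2 w.
Proof. by rewrite /mxform raddfB /= !mulmxBl !mxE. Qed.

Lemma mxformDr p (S : 'M[R]_p) (v w1 w2 : 'cV_p) :
  mxform S v (w1 + w2) = mxform S v w1 + mxform S v w2.
Proof. by rewrite /mxform !mulmxDr mxE. Qed.

Lemma mxformBr p (S : 'M[R]_p) (v w1 w2 : 'cV_p) :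
  mxform S v (w1 - w2) = mxform S v w1 - mxform S v w2.
Proof. by rewrite /mxform !mulmxBr !mxE. Qed.

Lemma mxformDmx p (S1 S2 : 'M[R]_p) (v w : 'cV_p) :
  mxform (S1 + S2) v w = mxform S1 v w + mxform S2 v w.
Proof. by rewrite /mxform mulmxDr mulmxDl mxE. Qed.

Lemma mxformBmx p (S1 S2 : 'M[R]_p) (v w : 'cV_p) :
  mxform (S1 - S2) v w = mxform S1 v w - mxform S2 v w.
Proof. by rewrite /mxform mulmxBr mulmxBl !mxE. Qed.

Lemma mxformMl p r t (S : 'M[R]_(p, t)) (M : 'M[R]_(p, r)) (v : 'cV_r) (w : 'cV_t) :
  mxform S (M *m v) w = mxform (M^T *m S) v w.
Proof. by rewrite /mxform trmx_mul !mulmxA. Qed.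

Lemma mxformMr p r t (S : 'M[R]_(t, p)) (M : 'M[R]_(p, r)) (v : 'cV_t) (w : 'cV_r) :
  mxform S v (M *m w) = mxform (S *m M) v w.
Proof. by rewrite /mxform !mulmxA. Qed.

Lemma mxform1M p r (M : 'M[R]_(p, r)) v w : mxform M v w = mxform 1%:M v (M *m w).
Proof. by rewrite mxformMr mul1mx. Qed.

Lemma mxform_tr p r (S : 'M[R]_(p, r)) v w : mxform S v w = mxform S^T w v.
Proof.
rewrite /mxform -[in LHS](trmxK (v^T *m S *m w)) [LHS]mxE.
by rewrite !trmx_mul trmxK mulmxA.
Qed.

Lemma mxform_congr p r (S : 'M[R]_p) (M : 'M[R]_(p, r)) v :
  mxform (M^T *m S *m M) v v = mxform S (M *m v) (M *m v).
Proof. by rewrite mxformMr mxformMl mulmxA. Qed.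

Lemma mxform0 p (S : 'M[R]_p) : mxform S 0 0 = 0.
Proof. by rewrite /mxform mulmx0 mxE. Qed.

Lemma wnormE p (S : 'M[R]_p) z : wnorm S z = mxform (invmx S) z z.
Proof. by []. Qed.

End MxForm.
Arguments mxform {R p r}.

Section PositiveDefinite.
Context {R : realFieldType}.
Implicit Types (p r : nat).

Lemma spd_ge0 {p} {S : 'M[R]_p} z : spd S -> 0 <= mxform S z z.
Proof.
move=> [_ hS]; have [->|nz] := eqVneq z 0; first by rewrite mxform0.
exact/ltW/hS.
Qed.

Lemma trmx_congr p r (S : 'M[R]_p) (M : 'M[R]_(p, r)) :
  S^T = S -> (M^T *m S *m M)^T = M^T *m S *m M.
Proof. by move=> hS; rewrite !trmx_mul trmxK hS mulmxA. Qed.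

Lemma spd_add_psd p (S M : 'M[R]_p) :
  spd S -> M^T = M -> (forall z, 0 <= mxform M z z) -> spd (S + M).
Proof.
move=> [sS pS] sM pM; split; first by rewrite raddfD /= sS sM.
move=> z nz; rewrite -/(mxform _ z z) mxformDmx.
exact: ltr_wpDr (pM z) (pS z nz).
Qed.

Lemma spd_add_congr p r (S : 'M[R]_p) (P : 'M[R]_r) (M : 'M[R]_(r, p)) :
  spd S -> spd P -> spd (S + M^T *m P *m M).
Proof.
move=> hS hP; apply: spd_add_psd; first exact: hS.
  exact: trmx_congr hP.1.
by move=> z; rewrite mxform_congr; apply: spd_ge0.
Qed.

Lemma spd_unit {p} {S : 'M[R]_p} : spd S -> S \in unitmx.
Proof.
move=> [_ hS]; rewrite unitmxE unitfE; apply/negP => /det0P [v nz hv].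
have := hS v^T; rewrite trmx_eq0 trmxK hv mul0mx mxE ltxx.
by move/(_ nz).
Qed.

Lemma spd_inv {p} {S : 'M[R]_p} : spd S -> spd (invmx S).
Proof.
move=> hS; have hu := spd_unit hS; split; first by rewrite trmx_inv hS.1.
move=> z nz; set w := invmx S *m z.
have zE : z = S *m w by rewrite /w mulKVmx.
have wnz : w != 0 by apply: contraNneq nz => w0; rewrite zE w0 mulmx0.
rewrite -/(mxform _ z z) zE mxformMl mxformMr hS.1 -mulmxA mulVmx // mulmx1.
exact: hS.2.
Qed.

Lemma spd_predict n1 n (P : 'M[R]_n) (Q : 'M[R]_n1) (A : 'M[R]_(n1, n)) :
  spd P -> spd Q -> spd (A *m P *m A^T + Q).
Proof. by move=> hP hQ; rewrite addrC -[A in A *m P]trmxK; apply: spd_add_congr. Qed.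

(* Full column rank of [col_mx E H]: [E z = 0] and [H z = 0] force [z = 0]. *)
Lemma spd_information p m n (E : 'M[R]_(p, n)) (H : 'M[R]_(m, n)) S Rr :
  \rank (col_mx E H) = n -> spd S -> spd Rr ->
  spd (E^T *m S *m E + H^T *m Rr *m H).
Proof.
move=> rEH hS hR; split.
  by rewrite raddfD /= !trmx_congr //; [exact: hR.1 | exact: hS.1].
move=> z nz; rewrite -/(mxform _ z z) mxformDmx !mxform_congr.
have [Ez0|Eznz] := eqVneq (E *m z) 0; last exact: ltr_wpDr (spd_ge0 _ hR) (hS.2 _ Eznz).
have [Hz0|Hznz] := eqVneq (H *m z) 0; last exact: ltr_wpDl (spd_ge0 _ hS) (hR.2 _ Hznz).
have /row_fullP [C hC] : row_full (col_mx E H) by rewrite /row_full rEH.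
move: nz; rewrite -[z]mul1mx -hC -mulmxA mul_col_mx Ez0 Hz0 col_mx0 mulmx0.
by rewrite eqxx.
Qed.

End PositiveDefinite.

Lemma woodbury (R : comUnitRingType) n1 n
    (A : 'M[R]_(n1, n)) (P : 'M[R]_n) (Q : 'M[R]_n1) :
  P \in unitmx -> Q \in unitmx -> invmx P + A^T *m invmx Q *m A \in unitmx ->
  invmx (A *m P *m A^T + Q) =
  invmx Q - invmx Q *m A *m invmx (invmx P + A^T *m invmx Q *m A) *m (A^T *m invmx Q).
Proof.
set W := A^T *m invmx Q; set Gi := invmx P + W *m A => uP uQ uG.
suff inv_r : (A *m P *m A^T + Q) *m (invmx Q - invmx Q *m A *m invmx Gi *m W) = 1%:M.
  have [uPm _] := mulmx1_unit inv_r.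
  by rewrite -[LHS]mulmx1 -inv_r mulmxA mulVmx // mul1mx.
have WA : W *m A = Gi - invmx P by rewrite /Gi addrC addKr.
have PmQi : (A *m P *m A^T + Q) *m invmx Q = A *m P *m W + 1%:M.
  by rewrite mulmxDl mulmxV // -!mulmxA.
clearbody W Gi.
have APW : (A *m P *m W + 1%:M) *m (A *m invmx Gi *m W) = A *m P *m W.
  rewrite mulmxDl mul1mx !mulmxA -(mulmxA (A *m P) W A) WA mulmxBr.
  by rewrite !mulmxBl -!mulmxA !mulKVmx // subrK.
have -> : invmx Q *m A *m invmx Gi *m W = invmx Q *m (A *m invmx Gi *m W).
  by rewrite !mulmxA.
by rewrite mulmxBr mulmxA PmQi APW addrAC subrr add0r.
Qed.

Section CompleteSquare.
Context {R : realFieldType}.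

Lemma mxform_complete_square p m n (E : 'M[R]_(p, n)) (H : 'M[R]_(m, n))
    (Si : 'M[R]_p) (Ri : 'M[R]_m) (M : 'M[R]_n) a yv xh x :
  Si^T = Si -> Ri^T = Ri -> M = E^T *m Si *m E + H^T *m Ri *m H ->
  M *m xh = E^T *m Si *m a + H^T *m Ri *m yv ->
  mxform Si (E *m x - a) (E *m x - a) + mxform Ri (yv - H *m x) (yv - H *m x) =
  mxform M (x - xh) (x - xh) + (mxform Si a a + mxform Ri yv yv - mxform M xh xh).
Proof.
move=> sSi sRi ME Mxh.
have sM : M^T = M by rewrite ME raddfD /= !trmx_congr.
have Exa : mxform Si (E *m x) a = mxform (E^T *m Si) x a by rewrite mxformMl.
have Eax : mxform Si a (E *m x) = mxform (E^T *m Si) x a by rewrite mxform_tr sSi Exa.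
have Hxy : mxform Ri (H *m x) yv = mxform (H^T *m Ri) x yv by rewrite mxformMl.
have Hyx : mxform Ri yv (H *m x) = mxform (H^T *m Ri) x yv by rewrite mxform_tr sRi Hxy.
have Mxx : mxform M x x = mxform Si (E *m x) (E *m x) + mxform Ri (H *m x) (H *m x).
  by rewrite ME mxformDmx !mxform_congr.
have Mxxh : mxform M x xh = mxform (E^T *m Si) x a + mxform (H^T *m Ri) x yv.
  by rewrite mxform1M Mxh mxformDr -!mxform1M.
have Mxhx : mxform M xh x = mxform M x xh by rewrite mxform_tr sM.
rewrite !mxformBl !mxformBr Exa Eax Hxy Hyx Mxhx Mxxh Mxx.
ring.
Qed.

(* The smoother step: completing the square in [d = x - xh] with the
   residual [r = b - A xh] fixed, then recognising the remaining constant
   [r^T (Q^-1 - Q^-1 A G A^T Q^-1) r] via Woodbury. *)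
Lemma smoothing_square n1 n (A : 'M[R]_(n1, n)) (P : 'M[R]_n) (Q : 'M[R]_n1) x xh b :
  spd P -> spd Q ->
  let G := invmx (invmx P + A^T *m invmx Q *m A) in
  wnorm P (x - xh) + wnorm Q (b - A *m x) =
  wnorm G (x - (xh + G *m A^T *m invmx Q *m (b - A *m xh)))
  + wnorm (A *m P *m A^T + Q) (b - A *m xh).
Proof.
move=> hP hQ G; rewrite {}/G.
set Gi := invmx P + A^T *m invmx Q *m A; set G := invmx Gi.
have hPi := spd_inv hP; have hQi := spd_inv hQ.
have hGi : spd Gi by apply: spd_add_congr.
have GiG : Gi *m G = 1%:M by rewrite mulmxV //; apply: spd_unit.
set d := x - xh; set r := b - A *m xh; set W := A^T *m invmx Q.
have -> : b - A *m x = r - A *m d by rewrite mulmxBr opprB addrA subrK.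
have -> : x - (xh + G *m A^T *m invmx Q *m r) = d - G *m (W *m r).
  by rewrite opprD addrA !mulmxA.
have GiE : Gi = 1%:M^T *m invmx P *m 1%:M + A^T *m invmx Q *m A.
  by rewrite trmx1 mul1mx mulmx1.
have center : Gi *m (G *m (W *m r)) = 1%:M^T *m invmx P *m 0 + A^T *m invmx Q *m r.
  by rewrite mulmxA GiG mul1mx mulmx0 add0r.
rewrite !wnormE.
have := @mxform_complete_square n n1 n 1%:M A _ _ _ 0 r _ d hPi.1 hQi.1 GiE center.
rewrite mul1mx subr0 mxform0 add0r => ->.
rewrite invmxK woodbury; try exact: spd_unit.
congr (_ + _); rewrite mxformBmx; congr (_ - _).
rewrite mxformMl mxformMr trmx_inv hGi.1 -/G -mulmxA GiG mulmx1.
by rewrite mxformMl mxformMr trmx_mul trmxK hQi.1 !mulmxA.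
Qed.

End CompleteSquare.

Section Filter.
Variables (R : realFieldType) (n1 n q m : nat).
Variables (E A : 'M[R]_(n1, n)) (B : 'M[R]_(n1, q)) (H : 'M[R]_(m, n)).
Variables (P0 : 'M[R]_n) (Q : 'M[R]_n1) (Rm : 'M[R]_m).
Variables (xbar0 : 'cV[R]_n) (u : nat -> 'cV[R]_q) (y : nat -> 'cV[R]_m).
Hypotheses (rankEH : \rank (col_mx E H) = n) (spdP0 : spd P0) (spdQ : spd Q)
  (spdRm : spd Rm).

Local Notation Pp := (Pplus E A B H P0 Q Rm xbar0 u y).
Local Notation Pm := (Pminus E A B H P0 Q Rm xbar0 u y).
Local Notation xh := (xhat E A B H P0 Q Rm xbar0 u y).
Local Notation Gs := (Gsm E A B H P0 Q Rm xbar0 u y).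
Local Notation xs := (xsm E A B H P0 Q Rm xbar0 u y).

Definition info_mx k := E^T *m invmx (Pm k) *m E + H^T *m invmx Rm *m H.

Lemma PplusS k : Pp k.+1 = invmx (info_mx k).
Proof. by rewrite /Pplus /info_mx /Pminus /Pplus /=; case: (kf _ _ _ _ _ _ _ _ _ _ k). Qed.

Lemma spd_Pplus k : spd (Pp k).
Proof.
elim: k => [|k IHk] //; rewrite PplusS.
apply/spd_inv/spd_information => //; apply/spd_inv => //.
exact: spd_predict.
Qed.

Lemma spd_Pminus k : spd (Pm k).
Proof. exact: spd_predict (spd_Pplus k) spdQ. Qed.

Lemma info_mx_unit k : info_mx k \in unitmx.
Proof. by apply/spd_unit/spd_information/spd_inv => //; apply/spd_inv/spd_Pminus. Qed.

Lemma info_mx_xhatS k :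
  info_mx k *m xh k.+1 =
  E^T *m invmx (Pm k) *m (A *m xh k + B *m u k) + H^T *m invmx Rm *m y k.+1.
Proof.
have -> : xh k.+1 = invmx (info_mx k) *m H^T *m invmx Rm *m y k.+1
    + invmx (info_mx k) *m E^T *m invmx (Pm k) *m (A *m xh k + B *m u k).
  by rewrite /xhat /info_mx /Pminus /Pplus /=; case: (kf _ _ _ _ _ _ _ _ _ _ k).
by rewrite [LHS]mulmxDr -!mulmxA !mulKVmx ?info_mx_unit // addrC !mulmxA.
Qed.

Definition window_cost T j (x : nat -> 'cV[R]_n) : R :=
  wnorm (Pm j) (E *m x j.+1 - A *m xh j - B *m u j)
  + \sum_(j.+1 <= k < T) wnorm Q (E *m x k.+1 - A *m x k - B *m u k)
  + \sum_(j.+1 <= k < T.+1) wnorm Rm (y k - H *m x k).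

Definition smoother_residual k (x : nat -> 'cV[R]_n) : R :=
  wnorm (Gs k) (x k - xs k (x k.+1)).

Definition update_const j : R :=
  let a := A *m xh j + B *m u j in
  mxform (invmx (Pm j)) a a + mxform (invmx Rm) (y j.+1) (y j.+1)
  - mxform (info_mx j) (xh j.+1) (xh j.+1).

Lemma update_square j v :
  wnorm (Pm j) (E *m v - A *m xh j - B *m u j) + wnorm Rm (y j.+1 - H *m v) =
  wnorm (Pp j.+1) (v - xh j.+1) + update_const j.
Proof.
rewrite !wnormE PplusS invmxK -addrA -opprD.
apply: mxform_complete_square (info_mx_xhatS j) => //.
- by rewrite trmx_inv (spd_Pminus j).1.
- by rewrite trmx_inv spdRm.1.
Qed.

Lemma window_costS T j x : (j.+2 <= T)%N ->
  window_cost T j x = smoother_residual j.+1 x + window_cost T j.+1 x + update_const j.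
Proof.
move=> ltjT; rewrite /window_cost (big_ltn ltjT) (big_ltn (leqW ltjT)).
have := update_square j (x j.+1).
have := @smoothing_square R n1 n A _ _ (x j.+1) (xh j.+1) (E *m x j.+2 - B *m u j.+1)
  (spd_Pplus j.+1) spdQ.
rewrite /= /smoother_residual /xsm /Gsm /Pminus ![E *m x j.+2 - _ - B *m u j.+1]addrAC.
lra.
Qed.

Lemma window_cost_telescope T i x : (i < T)%N ->
  window_cost T 0 x = \sum_(1 <= k < i.+1) smoother_residual k x
    + window_cost T i x + \sum_(0 <= j < i) update_const j.
Proof.
elim: i => [|i IHi] ltiT; first by rewrite !big_geq // add0r addr0.
rewrite IHi ?(ltnW ltiT) // window_costS // (big_nat_recr i.+1 1) // (big_nat_recr i 0) //=.
lra.
Qed.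

End Filter.

Theorem theorem3 (R : realFieldType) (n1 n q m : nat)
  (E A : 'M[R]_(n1, n)) (B : 'M[R]_(n1, q)) (H : 'M[R]_(m, n))
  (P0 : 'M[R]_n) (Q : 'M[R]_n1) (Rm : 'M[R]_m)
  (xbar0 : 'cV[R]_n) (u : nat -> 'cV[R]_q) (y : nat -> 'cV[R]_m)
  (T N : nat) :
  \rank (col_mx E H) = n ->
  spd P0 -> spd Q -> spd Rm ->
  (1 <= N)%N -> (N <= T - 1)%N ->
  exists c : R, forall x : nat -> 'cV[R]_n,
    JT E A B H P0 Q Rm xbar0 u y T x =
      \sum_(1 <= k < T - N) wnorm (Gsm E A B H P0 Q Rm xbar0 u y k)
                               (x k - xsm E A B H P0 Q Rm xbar0 u y k (x k.+1))
      + SC E A B H P0 Q Rm xbar0 u y T N x + c.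
Proof.
move=> rankEH spdP0 spdQ spdRm N_ge1 N_le.
have TN : (T - N - 1).+1 = (T - N)%N by lia.
exists (\sum_(0 <= j < T - N - 1) update_const E A B H P0 Q Rm xbar0 u y j) => x.
have -> : JT E A B H P0 Q Rm xbar0 u y T x = window_cost E A B H P0 Q Rm xbar0 u y T 0 x.
  by [].
rewrite (window_cost_telescope A B xbar0 u y rankEH spdP0 spdQ spdRm x (_ : T - N - 1 < T)%N).
  by rewrite TN /window_cost /SC TN.
lia.
Qed.
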